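(* Assume $\mathfrak g$ is noncompact and has no nonzero proper $\sigma$-stable ideals. If $Y\in\mathfrak t^+$, then $|\alpha(Y)|<\pi$ for all $\alpha\in\Sigma$.
   Context: Let $G$ be a connected real semisimple Lie group with Lie algebra $\mathfrak g$. Let $\sigma$ be an involution of $G$ and $\theta$ a Cartan involution with $\sigma\theta=\theta\sigma$; the same letters denote the induced involutions of $\mathfrak g$. Let $\mathfrak g=\mathfrak k\oplus\mathfrak m$ and $\mathfrak g=\mathfrak h\oplus\mathfrak q$ be the $\pm1$-eigenspace decompositions for $\theta$ and $\sigma$. Let $\mathfrak t$ be a maximal abelian subspace of $\mathfrak k\cap\mathfrak q$. For a linear form $\alpha:\mathfrak t\to i\mathbb R$ put - $\mathfrak g_\mathbb C(\mathfrak t,\alpha)=\{X\in\mathfrak g_\mathbb C\mid[Y,X]=\alpha(Y)X\ \forall Y\in\mathfrak t\}$, - $\mathfrak m_\mathbb C(\mathfrak t,\alpha)=\mathfrak g_\mathbb C(\mathfrak t,\alpha)\cap\mathfrak m_\mathbb C$. Let $\Sigma=\{\alpha\neq0\mid\mathfrak g_\mathbb C(\mathfrak t,\alpha)\ne\{0\}\}$ and $\Sigma(\mathfrak m_\mathbb C,\mathfrak t)=\{\alpha\ne0\mid\mathfrak m_\mathbb C(\mathfrak t,\alpha)\ne\{0\}\}$. Put $\mathfrak t^+=\{Y\in\mathfrak t\mid|\alpha(Y)|<\pi/2\ \forall\alpha\in\Sigma(\mathfrak m_\mathbb C,\mathfrak t)\}$. *)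

From HB Require Import structures.
From mathcomp Require Import all_boot all_order all_algebra.
From mathcomp Require Import reals trigo.
Set Implicit Arguments. Unset Strict Implicit. Unset Printing Implicit Defensive.
Import Order.TTheory GRing.Theory Num.Theory.
Local Open Scope ring_scope.

Section LieDefs.
Variables (R : realType) (n : nat).
Notation V := 'rV[R]_n.
Variable br : V -> V -> V.

Definition linmap (f : V -> V) := forall (a : R) (x y : V), f (a *: x + y) = a *: f x + f y.

Definition lie_bracket :=
  (forall a x y z, br (a *: x + y) z = a *: br x z + br y z) /\
  (forall a x y z, br z (a *: x + y) = a *: br z x + br z y) /\
  (forall x, br x x = 0) /\
  (forall x y z, br x (br y z) + br y (br z x) + br z (br x y) = 0).

(* ad X as a matrix acting on row vectors: v *m ad X = [X, v] *)
Definition ad (X : V) : 'M[R]_n := lin1_mx (br X).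

Definition killing (X Y : V) : R := \tr (ad X *m ad Y).

Definition derived (U : {vspace V}) : {vspace V} :=
  <<[seq br x y | x <- vbasis U, y <- vbasis U]>>%VS.

Definition is_ideal (I : {vspace V}) := forall X Y, Y \in I -> br X Y \in I.

Definition solvable_sub (I : {vspace V}) := exists k, iter k derived I = 0%VS.

Definition semisimple := forall I : {vspace V}, is_ideal I -> solvable_sub I -> I = 0%VS.

(* compact (semisimple) Lie algebra: Killing form negative definite *)
Definition noncompact := ~ (forall X : V, X != 0 -> killing X X < 0).

Definition lie_automorphism (f : V -> V) :=
  linmap f /\ (forall X Y, f (br X Y) = br (f X) (f Y)) /\ bijective f.

Definition lie_involution (f : V -> V) := lie_automorphism f /\ (forall X, f (f X) = X).

Definition cartan_involution (theta : V -> V) :=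
  lie_involution theta /\ (forall X : V, X != 0 -> 0 < - killing X (theta X)).

Definition no_sigma_stable_ideals (sigma : V -> V) :=
  forall I : {vspace V}, is_ideal I -> (forall Y, Y \in I -> sigma Y \in I) ->
    I = 0%VS \/ I = fullv.

Variables (sigma theta : V -> V).

Definition in_k (X : V) := theta X = X.
Definition in_m (X : V) := theta X = - X.
Definition in_q (X : V) := sigma X = - X.

Definition abelian_sub (U : {vspace V}) := forall X Y, X \in U -> Y \in U -> br X Y = 0.
Definition sub_kq (U : {vspace V}) := forall X, X \in U -> in_k X /\ in_q X.

Definition max_abelian_kq (t : {vspace V}) :=
  sub_kq t /\ abelian_sub t /\
  forall U : {vspace V}, (t <= U)%VS -> sub_kq U -> abelian_sub U -> U = t.

Variable t : {vspace V}.

(* A linear form alpha : t -> iR is encoded as alpha = i * beta with beta : t -> R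
   (values of beta outside t are irrelevant).  An element of g_C is A + iB with
   A, B in g; [Y, A + iB] = i beta(Y) (A + iB) unfolds to
   [Y,A] = - beta(Y) B and [Y,B] = beta(Y) A. *)
Definition form_on_t (beta : V -> R) :=
  forall (a : R) Y Z, Y \in t -> Z \in t -> beta (a *: Y + Z) = a * beta Y + beta Z.

Definition nonzero_on_t (beta : V -> R) := exists2 Y, Y \in t & beta Y != 0.

Definition in_rootspace (beta : V -> R) (A B : V) :=
  forall Y, Y \in t -> br Y A = - (beta Y *: B) /\ br Y B = beta Y *: A.

(* alpha = i beta is in Sigma *)
Definition is_root (beta : V -> R) :=
  form_on_t beta /\ nonzero_on_t beta /\
  exists A B, (A != 0 \/ B != 0) /\ in_rootspace beta A B.

(* alpha = i beta is in Sigma(m_C, t) *)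
Definition is_m_root (beta : V -> R) :=
  form_on_t beta /\ nonzero_on_t beta /\
  exists A B, (A != 0 \/ B != 0) /\ in_m A /\ in_m B /\ in_rootspace beta A B.

(* |alpha(Y)| = |beta(Y)| *)
Definition in_tplus (Y : V) :=
  Y \in t /\ forall beta, is_m_root beta -> `|beta Y| < pi / 2.

End LieDefs.

From HB Require Import structures.
From mathcomp Require Import all_boot all_order all_algebra.
From mathcomp Require Import reals trigo.
From mathcomp Require Import complex.
From mathcomp Require Import lra.
From Stdlib Require Import Classical.
Set Implicit Arguments. Unset Strict Implicit. Unset Printing Implicit Defensive.
Import Order.TTheory GRing.Theory Num.Theory.
Local Open Scope ring_scope.

(* Write a root vector of alpha = i beta as A + iB. If the m-components of A and
   B do not both vanish, they form a root vector in m_C, so alpha lies in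
   Sigma(m_C, t) and |beta(Y)| < pi/2. Otherwise A and B lie in k, and
   M = ad A + i ad B preserves m_C and satisfies [M, ad Y] = i beta(Y) M, i.e. it
   raises ad Y-eigenvalues on m_C by i beta(Y). M does not vanish on m_C: the
   ideal m + [m, m] is sigma-stable and nonzero (g is noncompact), hence all of
   g, so the centralizer of m is central, hence 0 (g is semisimple). Thus some
   eigenvalues i l and i (l + beta(Y)) of ad Y occur on m_C; refining to joint
   eigenvectors of the commuting family ad t turns each into a weight in
   Sigma(m_C, t) (or 0), so |l|, |l + beta(Y)| < pi/2 and |beta(Y)| < pi. *)

Section Linmap.
Variables (R : realType) (n : nat).

Lemma mx_rV_ext m (A B : 'M[R]_(n, m)) : (forall v : 'rV[R]_n, v *m A = v *m B) -> A = B.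
Proof. by move=> eqAB; apply/row_matrixP => i; rewrite !rowE eqAB. Qed.

Variable f : 'rV[R]_n -> 'rV[R]_n.
Hypothesis f_lin : linmap f.

Definition linmap_fun := f.
Lemma linmap_fun_is_linear : linear linmap_fun.
Proof. by move=> a x y; apply: f_lin. Qed.
HB.instance Definition _ :=
  GRing.isLinear.Build R _ _ *:%R linmap_fun linmap_fun_is_linear.

Lemma mul_rV_lin1_linmap v : v *m lin1_mx f = f v.
Proof. exact: (mul_rV_lin1 linmap_fun). Qed.
Lemma linmapD (x y : 'rV[R]_n) : f (x + y) = f x + f y.
Proof. exact: (linearD linmap_fun). Qed.
Lemma linmapZ a (x : 'rV[R]_n) : f (a *: x) = a *: f x.
Proof. exact: (linearZZ linmap_fun). Qed.
Lemma linmapN (x : 'rV[R]_n) : f (- x) = - f x. Proof. exact: (linearN linmap_fun). Qed.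
Lemma linmapB (x y : 'rV[R]_n) : f (x - y) = f x - f y.
Proof. exact: (linearB linmap_fun). Qed.
Lemma linmap_sum I r (P : pred I) (F : I -> 'rV[R]_n) :
  f (\sum_(i <- r | P i) F i) = \sum_(i <- r | P i) f (F i).
Proof. exact: (linear_sum linmap_fun). Qed.

Lemma linmap_span (s : seq 'rV[R]_n) (U : {vspace 'rV[R]_n}) :
  {subset s <= [pred x | f x \in U]} -> forall x, x \in <<s>>%VS -> f x \in U.
Proof.
move=> fsU x /(@coord_span _ _ _ (in_tuple s)) ->.
rewrite linmap_sum; apply: memv_suml => i _; rewrite linmapZ memvZ //.
exact/fsU/mem_nth.
Qed.
End Linmap.

Lemma linmap_id (R : realType) n : linmap (@id 'rV[R]_n).
Proof. by []. Qed.

Section LieAlgebra.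
Variables (R : realType) (n : nat).
Notation V := 'rV[R]_n.
Variable br : V -> V -> V.
Hypothesis br_lie : lie_bracket br.

Lemma linmap_brr X : linmap (br X).
Proof. by case: br_lie => _ [brr _] a x y; rewrite brr. Qed.
Lemma linmap_brl Z : linmap (br^~ Z).
Proof. by case: br_lie => brl _ a x y; rewrite brl. Qed.

Lemma brDr X x y : br X (x + y) = br X x + br X y.
Proof. by rewrite (linmapD (linmap_brr X)). Qed.
Lemma brZr X a x : br X (a *: x) = a *: br X x.
Proof. by rewrite (linmapZ (linmap_brr X)). Qed.
Lemma brNr X x : br X (- x) = - br X x. Proof. by rewrite (linmapN (linmap_brr X)). Qed.
Lemma brBr X x y : br X (x - y) = br X x - br X y.
Proof. by rewrite (linmapB (linmap_brr X)). Qed.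
Lemma brDl x y Z : br (x + y) Z = br x Z + br y Z.
Proof. by rewrite (linmapD (linmap_brl Z)). Qed.
Lemma brZl a x Z : br (a *: x) Z = a *: br x Z.
Proof. by rewrite (linmapZ (linmap_brl Z)). Qed.
Lemma br0l Z : br 0 Z = 0. Proof. by rewrite -(scale0r 0) brZl !scale0r. Qed.

Lemma brxx x : br x x = 0. Proof. by case: br_lie => _ [_ []]. Qed.
Lemma brC x y : br x y = - br y x.
Proof.
apply/eqP; rewrite -addr_eq0; apply/eqP.
by have := brxx (x + y); rewrite brDl !brDr !brxx add0r addr0.
Qed.
Lemma br_brl X Y Z : br (br X Y) Z = br X (br Y Z) - br Y (br X Z).
Proof.
case: br_lie => _ [_ [_ /(_ X Y Z) jacobi]].
rewrite (brC Z (br X Y)) (brC Z X) brNr in jacobi.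
by apply/eqP; rewrite eq_sym -subr_eq0 jacobi.
Qed.
Lemma br_brr X x y : br X (br x y) = br (br X x) y - br (br X y) x.
Proof. by rewrite br_brl (brC (br X y) x) opprK subrK. Qed.

Lemma mul_rV_ad X v : v *m ad br X = br X v.
Proof. by rewrite /ad (mul_rV_lin1_linmap (linmap_brr X)). Qed.

Lemma ad_br X Y : ad br (br X Y) = ad br Y *m ad br X - ad br X *m ad br Y.
Proof. by apply: mx_rV_ext => v; rewrite mulmxBr !mulmxA !mul_rV_ad br_brl. Qed.
Lemma adD X Y : ad br (X + Y) = ad br X + ad br Y.
Proof. by apply: mx_rV_ext => v; rewrite mulmxDr !mul_rV_ad brDl. Qed.
Lemma adZ a X : ad br (a *: X) = a *: ad br X.
Proof. by apply: mx_rV_ext => v; rewrite -scalemxAr !mul_rV_ad brZl. Qed.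
Lemma ad0 : ad br 0 = 0.
Proof. by apply: mx_rV_ext => v; rewrite mul_rV_ad br0l mulmx0. Qed.

Lemma killingC X Y : killing br X Y = killing br Y X.
Proof. exact: mxtrace_mulC. Qed.
Lemma killingDl X Y Z : killing br (X + Y) Z = killing br X Z + killing br Y Z.
Proof. by rewrite /killing adD mulmxDl mxtraceD. Qed.
Lemma killingZl a X Z : killing br (a *: X) Z = a * killing br X Z.
Proof. by rewrite /killing adZ -scalemxAl mxtraceZ. Qed.
Lemma killing_brl X U W : killing br (br X U) W = - killing br U (br X W).
Proof.
rewrite /killing !ad_br mulmxBl mulmxBr !linearB /= opprB -!mulmxA.
by rewrite [\tr (ad br X *m _)]mxtrace_mulC -!mulmxA.
Qed.
End LieAlgebra.

Section CartanInvolution.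
Variables (R : realType) (n : nat).
Notation V := 'rV[R]_n.
Variable br : V -> V -> V.
Hypothesis br_lie : lie_bracket br.
Variable theta : V -> V.
Hypothesis theta_cartan : cartan_involution br theta.

Lemma theta_lin : linmap theta. Proof. by case: theta_cartan => [[[]]]. Qed.
Lemma theta_br X Y : theta (br X Y) = br (theta X) (theta Y).
Proof. by case: theta_cartan => [[[_ []]]]. Qed.
Lemma thetaK X : theta (theta X) = X. Proof. by case: theta_cartan => [[_]]. Qed.

Definition thmx := lin1_mx theta.
Lemma mul_rV_thmx v : v *m thmx = theta v.
Proof. by rewrite /thmx (mul_rV_lin1_linmap theta_lin). Qed.
Lemma thmxK : thmx *m thmx = 1%:M.
Proof. by apply: mx_rV_ext => v; rewrite mulmxA !mul_rV_thmx thetaK mulmx1. Qed.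
Lemma ad_theta X : ad br (theta X) = thmx *m ad br X *m thmx.
Proof.
apply: mx_rV_ext => v.
by rewrite !mulmxA mul_rV_thmx !(mul_rV_ad br_lie) mul_rV_thmx theta_br thetaK.
Qed.
Lemma ad_k_thmx_comm X : theta X = X -> ad br X *m thmx = thmx *m ad br X.
Proof. by move=> thX; rewrite -{1}thX ad_theta -!mulmxA thmxK mulmx1. Qed.
Lemma killing_theta X Y : killing br (theta X) (theta Y) = killing br X Y.
Proof.
rewrite /killing !ad_theta !mulmxA -[_ *m thmx *m thmx]mulmxA thmxK mulmx1.
by rewrite mxtrace_mulC !mulmxA thmxK mul1mx.
Qed.

Definition btheta X Y := - killing br X (theta Y).
Lemma bthetaC X Y : btheta X Y = btheta Y X.
Proof. by rewrite /btheta -killing_theta thetaK killingC. Qed.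
Lemma bthetaDl X Y Z : btheta (X + Y) Z = btheta X Z + btheta Y Z.
Proof. by rewrite /btheta (killingDl br_lie) opprD. Qed.
Lemma bthetaZl a X Z : btheta (a *: X) Z = a * btheta X Z.
Proof. by rewrite /btheta (killingZl br_lie) mulrN. Qed.
Lemma bthetaNl X Z : btheta (- X) Z = - btheta X Z.
Proof. by rewrite -scaleN1r bthetaZl mulN1r. Qed.
Lemma btheta_gt0 X : X != 0 -> 0 < btheta X X.
Proof. by case: theta_cartan => _; apply. Qed.
Lemma btheta_ge0 X : 0 <= btheta X X.
Proof.
have [->|/btheta_gt0/ltW //] := eqVneq X 0.
by rewrite -(scale0r 0) bthetaZl mul0r.
Qed.

Lemma btheta_ad_k Y u : theta Y = Y -> btheta (br Y u) u = 0.
Proof.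
move=> thY; suff: btheta (br Y u) u = - btheta (br Y u) u.
  by move/eqP; rewrite -addr_eq0 -mulr2n mulrn_eq0 => /eqP.
rewrite {1}/btheta (killing_brl br_lie) -{1}thY -theta_br opprK.
by rewrite /btheta -killing_theta thetaK killingC opprK.
Qed.

Lemma ad_k_eigenvalue_Re0 Y a b r s : theta Y = Y -> (a != 0) || (b != 0) ->
  br Y a = r *: a - s *: b -> br Y b = s *: a + r *: b -> r = 0.
Proof.
move=> thY ab Ya Yb.
have := btheta_ad_k a thY; have := btheta_ad_k b thY.
rewrite Ya Yb !bthetaDl bthetaNl !bthetaZl (bthetaC b a) => h1 h2.
have /eqP : r * (btheta a a + btheta b b) = 0 by lra.
rewrite mulf_eq0 paddr_eq0 ?btheta_ge0 // => /orP[/eqP //|/andP[/eqP aa /eqP bb]].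
by case/orP: ab => /btheta_gt0; rewrite ?aa ?bb ltxx.
Qed.

Definition kpart X := 2^-1 *: (X + theta X).
Definition mpart X := 2^-1 *: (X - theta X).

Lemma theta_kpart X : theta (kpart X) = kpart X.
Proof. by rewrite /kpart (linmapZ theta_lin) (linmapD theta_lin) thetaK addrC. Qed.
Lemma theta_mpart X : theta (mpart X) = - mpart X.
Proof. by rewrite /mpart (linmapZ theta_lin) (linmapB theta_lin) thetaK -scalerN opprB. Qed.
Lemma kpart_add_mpart X : kpart X + mpart X = X.
Proof.
rewrite -scalerDr addrACA subrr addr0 -mulr2n -scaler_nat scalerA.
by rewrite mulVf ?scale1r // pnatr_eq0.
Qed.
Lemma mpart_m X : theta X = - X -> mpart X = X.
Proof.
move=> thX; rewrite /mpart thX opprK -mulr2n -scaler_nat scalerA.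
by rewrite mulVf ?scale1r // pnatr_eq0.
Qed.
Lemma mpart_eq0 X : mpart X = 0 -> theta X = X.
Proof.
by move/eqP; rewrite scaler_eq0 invr_eq0 pnatr_eq0 /= subr_eq0 => /eqP <-.
Qed.
Lemma mpartZ a X : mpart (a *: X) = a *: mpart X.
Proof. by rewrite /mpart (linmapZ theta_lin) -scalerBr !scalerA mulrC. Qed.
Lemma mpartN X : mpart (- X) = - mpart X.
Proof. by rewrite -scaleN1r mpartZ scaleN1r. Qed.
Lemma br_k_mpart Y X : theta Y = Y -> br Y (mpart X) = mpart (br Y X).
Proof. by move=> thY; rewrite /mpart (brZr br_lie) (brBr br_lie) theta_br thY. Qed.
End CartanInvolution.

Lemma semisimple_center0 (R : realType) n (br : 'rV[R]_n -> 'rV[R]_n -> 'rV[R]_n) X :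
  lie_bracket br -> semisimple br -> (forall Y, br X Y = 0) -> X = 0.
Proof.
move=> br_lie ss central.
have line_ideal : is_ideal br <[X]>%VS.
  move=> W Y /vlineP[k ->].
  by rewrite (brZr br_lie) (brC br_lie W X) central oppr0 scaler0 mem0v.
have line_solvable : solvable_sub br <[X]>%VS.
  exists 1%N; apply/eqP; rewrite -subv0; apply/span_subvP => z.
  case/allpairsP => -[x y] /= [/vbasis_mem/vlineP[a ->] /vbasis_mem/vlineP[b ->] ->].
  by rewrite (brZl br_lie) (brZr br_lie) (brxx br_lie) !scaler0 mem0v.
apply/eqP; rewrite -memv0 -(ss _ line_ideal line_solvable); exact: memv_line.
Qed.

Section IdealGeneratedByM.
Variables (R : realType) (n : nat).
Notation V := 'rV[R]_n.
Variable br : V -> V -> V.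
Hypothesis br_lie : lie_bracket br.
Variables theta sigma : V -> V.
Hypothesis theta_cartan : cartan_involution br theta.

Definition mgens := [seq v - theta v | v <- vbasis (fullv : {vspace V})].
(* The ideal generated by m is m + [m, m]. *)
Definition m_ideal : {vspace V} :=
  <<mgens ++ [seq br x y | x <- mgens, y <- mgens]>>%VS.

Lemma mgens_m g : g \in mgens -> theta g = - g.
Proof.
case/mapP => v _ ->.
by rewrite (linmapB (theta_lin theta_cartan)) (thetaK theta_cartan) opprB.
Qed.

Lemma m_sub_span_mgens Z : theta Z = - Z -> Z \in <<mgens>>%VS.
Proof.
move=> /mpart_m <-; apply: memvZ.
rewrite {1 2}(coord_vbasis (memvf Z)) (linmap_sum (theta_lin theta_cartan)) -sumrB.
apply: memv_suml => i _; rewrite (linmapZ (theta_lin theta_cartan)) -scalerBr memvZ //.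
by apply/memv_span/map_f/mem_nth; rewrite size_tuple.
Qed.

Lemma m_sub_ideal Z : theta Z = - Z -> Z \in m_ideal.
Proof.
move/m_sub_span_mgens; apply: (linmap_span (@linmap_id R n)) => g gm.
by rewrite inE memv_span // mem_cat gm.
Qed.

Lemma br_m_m_ideal Z W : theta Z = - Z -> theta W = - W -> br Z W \in m_ideal.
Proof.
move=> /m_sub_span_mgens mZ /m_sub_span_mgens mW.
apply: (linmap_span (linmap_brl br_lie W)) mZ => g gm; rewrite inE.
apply: (linmap_span (linmap_brr br_lie g)) mW => g' g'm; rewrite inE.
by rewrite memv_span // mem_cat allpairs_f ?orbT.
Qed.

Lemma br_m_ideal X Z : theta Z = - Z -> br X Z \in m_ideal.
Proof.
move=> mZ; rewrite -(kpart_add_mpart theta X) (brDl br_lie) memvD //.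
  rewrite m_sub_ideal // (theta_br theta_cartan) (theta_kpart theta_cartan).
  by rewrite mZ (brNr br_lie).
by rewrite br_m_m_ideal // (theta_mpart theta_cartan).
Qed.

Lemma m_ideal_gens_ind (P : V -> Prop) :
  (forall Z, theta Z = - Z -> P Z) ->
  (forall Z W, theta Z = - Z -> theta W = - W -> P (br Z W)) ->
  forall g, g \in mgens ++ [seq br x y | x <- mgens, y <- mgens] -> P g.
Proof.
move=> Pm Pmm g; rewrite mem_cat => /orP[/mgens_m|]; first exact: Pm.
by case/allpairsP => -[x y] /= [/mgens_m xm /mgens_m ym ->]; apply: Pmm.
Qed.

Lemma m_ideal_is_ideal : is_ideal br m_ideal.
Proof.
move=> X; apply: (linmap_span (linmap_brr br_lie X)); apply: m_ideal_gens_ind.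
  by move=> Z mZ; rewrite inE br_m_ideal.
by move=> Z W mZ mW; rewrite inE (br_brr br_lie) memvB ?br_m_ideal.
Qed.

Hypothesis sigma_inv : lie_involution br sigma.
Hypothesis sigma_theta : forall X, sigma (theta X) = theta (sigma X).

Lemma m_ideal_sigma_stable Y : Y \in m_ideal -> sigma Y \in m_ideal.
Proof.
case: sigma_inv => -[sigma_lin [sigma_br _]] _.
have sigma_m Z : theta Z = - Z -> theta (sigma Z) = - sigma Z.
  by move=> mZ; rewrite -sigma_theta mZ (linmapN sigma_lin).
apply: (linmap_span sigma_lin); apply: m_ideal_gens_ind.
  by move=> Z mZ; rewrite inE m_sub_ideal ?sigma_m.
by move=> Z W mZ mW; rewrite inE sigma_br br_m_m_ideal ?sigma_m.
Qed.

Hypotheses (g_semisimple : semisimple br) (g_noncompact : noncompact br).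
Hypothesis no_ideals : no_sigma_stable_ideals br sigma.

(* If m were 0, theta would be the identity and the positivity of [btheta]
   would make the Killing form negative definite. *)
Lemma noncompact_m_neq0 : exists2 Z, theta Z = - Z & Z != 0.
Proof.
apply: NNPP => m0; apply: g_noncompact => X X0.
have mX0 : mpart theta X = 0.
  apply/eqP/contraT => mX; case: m0; exists (mpart theta X) => //.
  exact: (theta_mpart theta_cartan).
have := btheta_gt0 theta_cartan X0.
by rewrite /btheta (mpart_eq0 mX0) oppr_gt0.
Qed.

Lemma m_ideal_full : m_ideal = fullv.
Proof.
have [Z mZ Z0] := noncompact_m_neq0.
case: (no_ideals m_ideal_is_ideal m_ideal_sigma_stable) => // m_ideal0.
by move: (m_sub_ideal mZ); rewrite m_ideal0 memv0 (negbTE Z0).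
Qed.

Lemma m_centralizer0 X : (forall Z, theta Z = - Z -> br X Z = 0) -> X = 0.
Proof.
move=> cXm; apply: (semisimple_center0 br_lie g_semisimple) => Y.
apply/eqP; rewrite -memv0.
have : Y \in m_ideal by rewrite m_ideal_full memvf.
apply: (linmap_span (linmap_brr br_lie X)); apply: m_ideal_gens_ind.
  by move=> Z mZ; rewrite inE cXm ?mem0v.
by move=> Z W mZ mW; rewrite inE (br_brr br_lie) !cXm // !(br0l br_lie) subr0 mem0v.
Qed.
End IdealGeneratedByM.

Local Open Scope complex_scope.

Section ComplexMatrices.
Variable R : realType.
Notation C := R[i].
Local Notation Re := (@complex.Re R).
Local Notation Im := (@complex.Im R).
Implicit Types (a b : C) (k : R).

Lemma ReD a b : Re (a + b) = Re a + Re b.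
Proof. by case: a => ? ?; case: b => ? ?; simpc. Qed.
Lemma ImD a b : Im (a + b) = Im a + Im b.
Proof. by case: a => ? ?; case: b => ? ?; simpc. Qed.
Lemma ReN a : Re (- a) = - Re a. Proof. by case: a => ? ?; simpc. Qed.
Lemma ImN a : Im (- a) = - Im a. Proof. by case: a => ? ?; simpc. Qed.
Lemma ReM a b : Re (a * b) = Re a * Re b - Im a * Im b.
Proof. by case: a => ? ?; case: b => ? ?; simpc. Qed.
Lemma ImM a b : Im (a * b) = Im a * Re b + Re a * Im b.
Proof. by case: a => ? ?; case: b => ? ?; simpc => /=; rewrite addrC. Qed.
Lemma Re_mul_real a k : Re (a * k%:C) = Re a * k.
Proof. by rewrite ReM /= mulr0 subr0. Qed.
Lemma Im_mul_real a k : Im (a * k%:C) = Im a * k.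
Proof. by rewrite ImM /= mulr0 addr0. Qed.

Definition cmx p q (M : 'M[R]_(p, q)) : 'M[C]_(p, q) := map_mx (real_complex R) M.
Definition remx p q (M : 'M[C]_(p, q)) : 'M[R]_(p, q) := map_mx Re M.
Definition immx p q (M : 'M[C]_(p, q)) : 'M[R]_(p, q) := map_mx Im M.

Lemma cmxD p q (M N : 'M[R]_(p, q)) : cmx (M + N) = cmx M + cmx N.
Proof. exact: map_mxD. Qed.
Lemma cmxB p q (M N : 'M[R]_(p, q)) : cmx (M - N) = cmx M - cmx N.
Proof. exact: map_mxB. Qed.
Lemma cmxZ p q k (M : 'M[R]_(p, q)) : cmx (k *: M) = k%:C *: cmx M.
Proof. exact: map_mxZ. Qed.
Lemma cmxM p q r (M : 'M[R]_(p, q)) (N : 'M[R]_(q, r)) : cmx (M *m N) = cmx M *m cmx N.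
Proof. exact: map_mxM. Qed.

Lemma remx_mul_cmx p q r (x : 'M[C]_(p, q)) (M : 'M[R]_(q, r)) :
  remx (x *m cmx M) = remx x *m M.
Proof.
apply/matrixP => i j; rewrite !mxE (big_morph _ ReD (erefl : Re 0 = 0)).
by apply: eq_bigr => k _; rewrite !mxE Re_mul_real.
Qed.
Lemma immx_mul_cmx p q r (x : 'M[C]_(p, q)) (M : 'M[R]_(q, r)) :
  immx (x *m cmx M) = immx x *m M.
Proof.
apply/matrixP => i j; rewrite !mxE (big_morph _ ImD (erefl : Im 0 = 0)).
by apply: eq_bigr => k _; rewrite !mxE Im_mul_real.
Qed.
Lemma remxZ p q a (x : 'M[C]_(p, q)) : remx (a *: x) = Re a *: remx x - Im a *: immx x.
Proof. by apply/matrixP => i j; rewrite !mxE ReM. Qed.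
Lemma immxZ p q a (x : 'M[C]_(p, q)) : immx (a *: x) = Im a *: remx x + Re a *: immx x.
Proof. by apply/matrixP => i j; rewrite !mxE ImM. Qed.
Lemma remxN p q (x : 'M[C]_(p, q)) : remx (- x) = - remx x.
Proof. by apply/matrixP => i j; rewrite !mxE ReN. Qed.
Lemma immxN p q (x : 'M[C]_(p, q)) : immx (- x) = - immx x.
Proof. by apply/matrixP => i j; rewrite !mxE ImN. Qed.

Lemma cmx_add_i_eq0 p q (M N : 'M[R]_(p, q)) :
  (cmx M + 'i *: cmx N == 0) = (M == 0) && (N == 0).
Proof.
have entryE i j : (cmx M + 'i *: cmx N) i j = M i j +i* N i j.
  by rewrite !mxE; simpc.
apply/eqP/andP => [MN0|[/eqP-> /eqP->]]; last first.
  by rewrite /cmx map_mx0 scaler0 addr0.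
by split; apply/eqP/matrixP => i j; have := congr1 (fun A : 'M[C]_(p, q) => A i j) MN0;
  rewrite entryE mxE => /eqP; rewrite eq_complex /= mxE => /andP[/eqP ? /eqP ?].
Qed.

Lemma remx_immx_eq0 p q (x : 'M[C]_(p, q)) : (x == 0) = (remx x == 0) && (immx x == 0).
Proof.
apply/eqP/andP => [->|[/eqP re0 /eqP im0]].
  by split; apply/eqP/matrixP => i j; rewrite !mxE.
apply/matrixP => i j; have := congr1 (fun A : 'M[R]_(p, q) => A i j) re0.
have := congr1 (fun A : 'M[R]_(p, q) => A i j) im0; rewrite !mxE.
by case: (x i j) => ? ? /= -> ->.
Qed.

(* Only meaningful when [x] is an eigenvector of [M]. *)
Definition rV_eigenvalue n (x : 'rV[C]_n) (M : 'M[C]_n) : C :=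
  if [pick j | x 0 j != 0] is Some j then (x *m M) 0 j / x 0 j else 0.
Lemma rV_eigenvalueP n (x : 'rV[C]_n) M c :
  x != 0 -> x *m M = c *: x -> rV_eigenvalue x M = c.
Proof.
move=> x0 eig; rewrite /rV_eigenvalue; case: pickP => [j xj0|x_eq0].
  by rewrite eig mxE mulfK.
by case/eqP: x0; apply/rowP => j; have := x_eq0 j; rewrite mxE /= => /negbFE/eqP.
Qed.
End ComplexMatrices.

Section WeightsOnM.
Variables (R : realType) (n : nat).
Notation V := 'rV[R]_n.
Notation C := R[i].
Local Notation Re := (@complex.Re R).
Local Notation Im := (@complex.Im R).
Variable br : V -> V -> V.
Hypothesis br_lie : lie_bracket br.
Variable theta : V -> V.
Hypothesis theta_cartan : cartan_involution br theta.
Variable t : {vspace V}.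
Hypothesis t_k : forall Y, Y \in t -> theta Y = Y.
Hypothesis t_abelian : forall X Y, X \in t -> Y \in t -> br X Y = 0.

Local Notation adc Y := (cmx (ad br Y)).
Local Notation thc := (cmx (thmx theta)).

Definition mC := kermx (thc + 1%:M).

Lemma sub_mC (v : 'rV[C]_n) : (v <= mC)%MS = (v *m thc == - v).
Proof. by rewrite sub_kermx mulmxDr mulmx1 addr_eq0. Qed.

Lemma stablemx_mC (M : 'M[C]_n) : comm_mx thc M -> stablemx mC M.
Proof.
move=> thcM; apply: comm_mx_stable_ker; apply: comm_mx_sym; apply: comm_mxD.
  exact: comm_mx_sym.
exact: comm_mx1.
Qed.

Lemma thc_ad_k_comm X : theta X = X -> comm_mx thc (adc X).
Proof. by move=> kX; rewrite /comm_mx -!cmxM (ad_k_thmx_comm br_lie theta_cartan kX). Qed.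

Lemma ad_t_comm X Y : X \in t -> Y \in t -> comm_mx (adc X) (adc Y).
Proof.
move=> tX tY; rewrite /comm_mx -!cmxM; congr cmx; apply/eqP.
by rewrite -subr_eq0 -(ad_br br_lie) t_abelian // (ad0 br_lie).
Qed.

Lemma joint_t_eigenvector (w : 'rV[C]_n) Y l : Y \in t -> w != 0 ->
  (w <= mC)%MS -> w *m adc Y = l *: w ->
  exists x : 'rV[C]_n, [/\ x != 0, (x <= mC)%MS, x *m adc Y = l *: x &
    forall Y', Y' \in t -> exists c, x *m adc Y' = c *: x].
Proof.
move=> tY w0 w_mC wY.
pose E := (mC :&: eigenspace (adc Y) l)%MS.
have wE : (w <= E)%MS.
  by rewrite sub_capmx; apply/andP; split; [exact: w_mC | exact/eigenspaceP].
have stE X : X \in t -> stablemx E (adc X).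
  move=> tX; rewrite sub_capmx; apply/andP; split.
    apply: submx_trans (submxMr _ (capmxSl _ _)) _.
    exact/stablemx_mC/thc_ad_k_comm/t_k.
  apply: submx_trans (submxMr _ (capmxSr _ _)) _.
  by apply: comm_mx_stable_eigenspace; apply: ad_t_comm.
have rE : (0 < \rank E)%N.
  by rewrite lt0n mxrank_eq0; apply: contraNneq w0 => E0; move: wE; rewrite E0 submx0.
pose As := [seq restrictmx E (adc b) | b <- vbasis t].
have As_comm : {in As &, forall A B, comm_mx A B}.
  move=> _ _ /mapP[b1 /vbasis_mem b1t ->] /mapP[b2 /vbasis_mem b2t ->].
  have s1 : stablemx (row_base E) (adc b1) by rewrite stablemx_row_base stE.
  have s2 : stablemx (row_base E) (adc b2) by rewrite stablemx_row_base stE.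
  by rewrite /comm_mx -(conjmxM s1 s2) -(conjmxM s2 s1) (ad_t_comm b1t b2t).
have [v v0 /allP v_eig] := common_eigenvector rE As_comm.
pose x := v *m row_base E.
have xE : (x <= E)%MS by rewrite (submx_trans (submxMl _ _)) // eq_row_base.
have x0 : x != 0 by rewrite mulmx_free_eq0 ?row_base_free.
have /andP[x_mC /eigenspaceP xY] : (x <= mC)%MS && (x <= eigenspace (adc Y) l)%MS.
  by rewrite -sub_capmx.
exists x; split => //.
move=> Y' tY'; rewrite (coord_vbasis tY') (big_morph (ad br) (adD br_lie) (ad0 br_lie)).
apply: (big_ind (fun M => exists c, x *m cmx M = c *: x)).
- by exists 0; rewrite /cmx map_mx0 mulmx0 scale0r.
- by move=> M1 M2 [c1 h1] [c2 h2]; exists (c1 + c2); rewrite cmxD mulmxDr h1 h2 scalerDl.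
move=> i _; rewrite (adZ br_lie) cmxZ -scalemxAr.
have bi : (vbasis t)`_i \in vbasis t by rewrite mem_nth ?size_tuple.
have := v_eig _ (map_f (fun b => restrictmx E (adc b)) bi).
rewrite (stablemx_restrict _ (stE _ (vbasis_mem bi))) => /sub_rVP[c xc].
by exists ((coord (vbasis t) i Y')%:C * c); rewrite xc scalerA.
Qed.

Definition mC_weight (x : 'rV[C]_n) (Y : V) := Im (rV_eigenvalue x (adc Y)).

Section JointEigenvector.
Variable x : 'rV[C]_n.
Hypotheses (x0 : x != 0) (x_mC : (x <= mC)%MS).
Hypothesis x_eig : forall Y, Y \in t -> exists c, x *m adc Y = c *: x.

Lemma mC_weightE Y : Y \in t ->
  x *m adc Y = ((mC_weight x Y)%:C * 'i) *: x.
Proof.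
move=> tY; have [c xc] := x_eig tY; rewrite /mC_weight (rV_eigenvalueP x0 xc).
suff ReC0 : Re c = 0 by case: c ReC0 xc => a b /= -> ->; simpc.
have ab : (remx x != 0) || (immx x != 0) by rewrite -negb_and -remx_immx_eq0.
apply: (ad_k_eigenvalue_Re0 br_lie theta_cartan (t_k tY) ab).
  by rewrite -(mul_rV_ad br_lie) -remx_mul_cmx xc remxZ.
by rewrite -(mul_rV_ad br_lie) -immx_mul_cmx xc immxZ.
Qed.

Lemma mC_weight_is_m_root : nonzero_on_t t (mC_weight x) ->
  is_m_root br theta t (mC_weight x).
Proof.
move=> nz; split; last split => //.
  move=> a Y Z tY tZ; have tYZ : a *: Y + Z \in t by rewrite memvD ?memvZ.
  have := mC_weightE tYZ; rewrite (adD br_lie) (adZ br_lie) cmxD cmxZ mulmxDr.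
  rewrite -scalemxAr !mC_weightE // scalerA -scalerDl => /eqP.
  rewrite -subr_eq0 -scalerBl scaler_eq0 (negbTE x0) orbF subr_eq0 => /eqP.
  by move/(congr1 (fun c => Re (c * - 'i))); simpc.
have thx : x *m thc = - x by apply/eqP; rewrite -sub_mC.
have re_m : in_m theta (remx x).
  by rewrite /in_m -(mul_rV_thmx theta_cartan) -remx_mul_cmx thx remxN.
have im_m : in_m theta (immx x).
  by rewrite /in_m -(mul_rV_thmx theta_cartan) -immx_mul_cmx thx immxN.
exists (remx x), (immx x); split; first by apply/orP; rewrite -negb_and -remx_immx_eq0.
split; first exact: re_m; split; first exact: im_m.
move=> Y tY; rewrite -!(mul_rV_ad br_lie) -remx_mul_cmx -immx_mul_cmx mC_weightE //.
by rewrite remxZ immxZ /=; simpc; rewrite !scale0r sub0r addr0.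
Qed.
End JointEigenvector.

Lemma mC_eigenvalue_bound (w : 'rV[C]_n) Y l : in_tplus br theta t Y ->
  w != 0 -> (w <= mC)%MS -> w *m adc Y = l *: w -> `|Im l| < pi / 2.
Proof.
move=> [tY tplusY] w0 w_mC wY.
have [x [x0 x_mC xY x_eig]] := joint_t_eigenvector tY w0 w_mC wY.
have [l0|l_neq0] := eqVneq (Im l) 0; first by rewrite l0 normr0 divr_gt0 ?pi_gt0.
have lE : Im l = mC_weight x Y by rewrite /mC_weight (rV_eigenvalueP x0 xY).
rewrite lE; apply/tplusY/mC_weight_is_m_root => //.
by exists Y; rewrite // -lE.
Qed.
End WeightsOnM.

Lemma horner_prod_XsubC_factor (F : fieldType) r m (A : 'M[F]_r.+1)
    (G : 'M[F]_(r.+1, m)) (rs : seq F) (c0 : 'rV_r.+1) :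
  c0 *m G != 0 -> c0 *m horner_mx A (\prod_(z <- rs) ('X - z%:P)) *m G = 0 ->
  exists z (c : 'rV_r.+1), [/\ z \in rs, c *m G != 0 & c *m (A - z%:M) *m G = 0].
Proof.
elim: rs c0 => [|z rs IHrs] c0 c0G.
  by rewrite big_nil rmorph1 mulmx1 => /eqP; rewrite (negbTE c0G).
rewrite big_cons rmorphM rmorphB /= horner_mx_X horner_mx_C mulmxA.
have [czG|czG] := eqVneq (c0 *m (A - z%:M) *m G) 0.
  by move=> _; exists z, c0; rewrite mem_head.
by move=> /(IHrs _ czG)[z' [c [z'rs cG cz']]]; exists z', c; rewrite in_cons z'rs orbT.
Qed.

(* [M] is a ladder operator for [N]: it shifts [N]-eigenvalues by [b]. *)
Lemma ladder_eigenvectors (F : closedFieldType) n r (P : 'M[F]_(r, n)) (N M : 'M[F]_n)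
    (b : F) (z : 'rV_n) :
  row_free P -> stablemx P N -> stablemx P M -> (z <= P)%MS -> z *m M != 0 ->
  M *m N = N *m M + b *: M ->
  exists l (w u : 'rV_n), [/\ w != 0, (w <= P)%MS & w *m N = l *: w] /\
     [/\ u != 0, (u <= P)%MS & u *m N = (l + b) *: u].
Proof.
case: r P => [|r] P freeP stN stM zP zM MN.
  by move: zP zM; rewrite (flatmx0 P) => /submx0null ->; rewrite mul0mx eqxx.
pose Nr := conjmx P N.
have NrP : Nr *m P = P *m N by rewrite /Nr /conjmx mulmxKpV.
pose c0 := z *m pinvmx P; have c0P : c0 *m P = z by rewrite /c0 mulmxKpV.
have [rs charNr] := closed_field_poly_normal (char_poly Nr).
rewrite (monicP (char_poly_monic Nr)) scale1r in charNr.
have c0PM : c0 *m (P *m M) != 0 by rewrite mulmxA c0P.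
have : c0 *m horner_mx Nr (\prod_(l <- rs) ('X - l%:P)) *m (P *m M) = 0.
  by rewrite -charNr Cayley_Hamilton mulmx0 mul0mx.
case/(horner_prod_XsubC_factor c0PM) => l [c [lrs cPM cl]].
have : eigenvalue Nr l by rewrite eigenvalue_root_char charNr root_prod_XsubC.
case/eigenvalueP => e eNr e0.
exists l, (e *m P), (c *m P *m M); split; split.
- by rewrite mulmx_free_eq0.
- exact: submxMl.
- by rewrite -mulmxA -NrP mulmxA eNr scalemxAl.
- by rewrite -mulmxA.
- exact: submx_trans (submxMr _ (submxMl _ _)) stM.
have cPN : c *m P *m N *m M = l *: (c *m P *m M).
  move/eqP: cl; rewrite mulmxBr mulmxBl mul_mx_scalar -scalemxAl subr_eq0 => /eqP.
  by rewrite mulmxA -(mulmxA c Nr P) NrP !mulmxA.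
by rewrite -mulmxA MN mulmxDr -scalemxAr !mulmxA cPN scalerDl.
Qed.

Lemma ad_root_ladder (R : realType) n (br : 'rV[R]_n -> 'rV[R]_n -> 'rV[R]_n) Y A B b :
  lie_bracket br -> br Y A = - (b *: B) -> br Y B = b *: A ->
  let M := cmx (ad br A) + 'i *: cmx (ad br B) in
  M *m cmx (ad br Y) = cmx (ad br Y) *m M + ('i * b%:C) *: M.
Proof.
move=> br_lie YA YB M.
have adAY : ad br A *m ad br Y = ad br Y *m ad br A - b *: ad br B.
  have := ad_br br_lie Y A; rewrite YA -scaleNr (adZ br_lie) => /esym/eqP.
  by rewrite subr_eq scaleNr => /eqP ->; rewrite addrC.
have adBY : ad br B *m ad br Y = ad br Y *m ad br B + b *: ad br A.
  have := ad_br br_lie Y B; rewrite YB (adZ br_lie) => /esym/eqP.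
  by rewrite subr_eq => /eqP ->; rewrite addrC.
rewrite /M mulmxDl mulmxDr -!scalemxAl -!scalemxAr -!cmxM adAY adBY cmxB cmxD !cmxZ.
rewrite !scalerDr !scalerA mulrAC -expr2 sqr_i mulN1r scaleNr.
by rewrite addrACA [- _ + _]addrC.
Qed.

Section RootBound.
Variables (R : realType) (n : nat).
Notation V := 'rV[R]_n.
Variable br : V -> V -> V.
Hypothesis br_lie : lie_bracket br.
Variable theta : V -> V.
Hypothesis theta_cartan : cartan_involution br theta.
Variable t : {vspace V}.
Hypothesis t_k : forall Y, Y \in t -> theta Y = Y.
Hypothesis t_abelian : forall X Y, X \in t -> Y \in t -> br X Y = 0.

Local Notation adc Y := (cmx (ad br Y)).
Local Notation thc := (cmx (thmx theta)).

Lemma rootspace_mpart beta A B : in_rootspace br t beta A B ->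
  in_rootspace br t beta (mpart theta A) (mpart theta B).
Proof.
move=> root Y tY; have [YA YB] := root Y tY.
rewrite !(br_k_mpart br_lie theta_cartan _ (t_k tY)) YA YB.
by rewrite (mpartN theta_cartan) !(mpartZ theta_cartan).
Qed.

Hypothesis m_centralizer_trivial :
  forall X, (forall Z, theta Z = - Z -> br X Z = 0) -> X = 0.

Lemma k_root_bound beta A B Y : theta A = A -> theta B = B -> A != 0 \/ B != 0 ->
  in_rootspace br t beta A B -> in_tplus br theta t Y -> `|beta Y| < pi.
Proof.
move=> kA kB AB root tplusY; have [tY _] := tplusY; have [YA YB] := root Y tY.
have [Z mZ ZAB] : exists2 Z, theta Z = - Z & (br A Z != 0) || (br B Z != 0).
  apply: NNPP => noZ; suff [A0 B0] : A = 0 /\ B = 0 by case: AB; rewrite ?A0 ?B0 eqxx.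
  by split; apply: m_centralizer_trivial => Z mZ; apply/eqP/contraT => ZX;
    case: noZ; exists Z; rewrite // ZX ?orbT.
pose M := cmx (ad br A) + 'i *: cmx (ad br B).
have stable_mC N : comm_mx thc N -> stablemx (row_base (mC theta)) N.
  by move=> thcN; rewrite stablemx_row_base stablemx_mC.
have MmC : stablemx (row_base (mC theta)) M.
  apply: stable_mC; rewrite /comm_mx /M mulmxDl mulmxDr -scalemxAr -scalemxAl.
  by rewrite (thc_ad_k_comm br_lie theta_cartan kA) (thc_ad_k_comm br_lie theta_cartan kB).
have YmC := stable_mC _ (thc_ad_k_comm br_lie theta_cartan (t_k tY)).
have ZmC : (cmx Z <= row_base (mC theta))%MS.
  by rewrite eq_row_base sub_mC -cmxM (mul_rV_thmx theta_cartan) mZ /cmx map_mxN.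
have ZM : cmx Z *m M != 0.
  by rewrite /M mulmxDr -scalemxAr -!cmxM !(mul_rV_ad br_lie) cmx_add_i_eq0 negb_and.
have [l [w [u [[w0 w_mC wY] [u0 u_mC uY]]]]] :=
  ladder_eigenvectors (row_base_free (mC theta)) YmC MmC ZmC ZM (ad_root_ladder br_lie YA YB).
rewrite !eq_row_base in w_mC u_mC.
have := mC_eigenvalue_bound br_lie theta_cartan t_k t_abelian tplusY w0 w_mC wY.
have := mC_eigenvalue_bound br_lie theta_cartan t_k t_abelian tplusY u0 u_mC uY.
rewrite ImD /=; simpc => lb_bound l_bound.
have := ler_normD (- complex.Im l) (complex.Im l + beta Y).
by rewrite addKr normrN; lra.
Qed.
End RootBound.

Theorem lemma1 (R : realType) (n : nat) (br : 'rV[R]_n -> 'rV[R]_n -> 'rV[R]_n)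
  (sigma theta : 'rV[R]_n -> 'rV[R]_n) (t : {vspace 'rV[R]_n}) :
  lie_bracket br -> semisimple br ->
  lie_involution br sigma -> cartan_involution br theta ->
  (forall X, sigma (theta X) = theta (sigma X)) ->
  max_abelian_kq br sigma theta t ->
  noncompact br -> no_sigma_stable_ideals br sigma ->
  forall Y : 'rV[R]_n, in_tplus br theta t Y ->
  forall beta : 'rV[R]_n -> R, is_root br t beta -> `|beta Y| < pi.
Proof.
move=> br_lie ss sigma_inv theta_cartan sigma_theta [t_kq [t_abelian _]] noncpt
  no_ideals Y tplusY beta [form_beta [nz_beta [A [B [AB root]]]]].
have t_k Y' : Y' \in t -> theta Y' = Y' by case/t_kq.
have [mAB|] := boolP ((mpart theta A != 0) || (mpart theta B != 0)).
  have m_root : is_m_root br theta t beta.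
    do 2 split => //; exists (mpart theta A), (mpart theta B).
    split; first exact/orP.
    split; first exact: (theta_mpart theta_cartan).
    split; first exact: (theta_mpart theta_cartan).
    exact: (rootspace_mpart br_lie theta_cartan t_k).
  by have := tplusY.2 _ m_root; have := @pi_gt0 R; lra.
rewrite negb_or !negbK => /andP[/eqP/mpart_eq0 kA /eqP/mpart_eq0 kB].
apply: (k_root_bound br_lie theta_cartan t_k t_abelian _ kA kB AB root tplusY).
exact: (m_centralizer0 br_lie theta_cartan sigma_inv sigma_theta ss noncpt no_ideals).
Qed.
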